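(* If $M\in\overline{ARI}$ is circ-neutral, then $Ad_{\overline{ari}}(invpil)\cdot M$ is also circ-neutral.
   Context: $\overline{ARI}$: moulds $M=(M^r)_{r\ge0}$, $M^r\in\mathbb{Q}(v_1,\dots,v_r)$, $M^0=0$; $M$ is circ-neutral if $\sum_{i=0}^{r-1}M(v_{i+1},\dots,v_r,v_1,\dots,v_i)=0$ for all $r>1$. Bracket: $mu(A,B)(\mathbf v)=\sum_{i=0}^rA(v_1,\dots,v_i)B(v_{i+1},\dots,v_r)$, $lu(A,B)=mu(A,B)-mu(B,A)$, $(\overline{amit}(B)A)(\mathbf v)=\sum_{0\le i<j<r}A(v_1,\dots,v_i,v_{j+1},\dots,v_r)B(v_{i+1}-v_{j+1},\dots,v_j-v_{j+1})$, $(\overline{anit}(B)A)(\mathbf v)=\sum_{1\le i<j\le r}A(v_1,\dots,v_i,v_{j+1},\dots,v_r)B(v_{i+1}-v_i,\dots,v_j-v_i)$, $\overline{arit}=\overline{amit}-\overline{anit}$, $\overline{ari}(A,B)=\overline{arit}(B)A-\overline{arit}(A)B+lu(A,B)$. Let $f(x)=1-e^{-x}$ and define $c_r\in\mathbb{Q}$ by $f_*(x)=\sum_{r\ge1}c_rx^{r+1}$, where $f_*$ is the infinitesimal generator of $f$, i.e. $f(x)=\exp(f_*(x)\frac{d}{dx})\cdot x$. Let $lopil\in\overline{ARI}$ be $lopil(v_1,\dots,v_r)=c_r\frac{v_1+\dots+v_r}{v_1(v_1-v_2)\cdots(v_{r-1}-v_r)v_r}$. Then $Ad_{\overline{ari}}(invpil)=\exp(ad_{\overline{ari}}(-lopil))$,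 i.e. $Ad_{\overline{ari}}(invpil)\cdot M=\sum_{k\ge0}\frac{1}{k!}ad_{\overline{ari}}(-lopil)^k(M)$ with $ad_{\overline{ari}}(P)(Q)=\overline{ari}(P,Q)$. *)

From HB Require Import structures.
From mathcomp Require Import all_boot all_order all_algebra.
From mathcomp Require Import fraction.
From mathcomp Require Import mpoly.
Set Implicit Arguments. Unset Strict Implicit. Unset Printing Implicit Defensive.
Import Order.TTheory GRing.Theory Num.Theory.
Local Open Scope ring_scope.

Notation "x %:F" := (@FracField.tofrac _ x).

(* Polynomials in r variables v_1..v_r over Q; variable v_(k+1) is [var r k]. *)
Definition Pol (r : nat) := {mpoly rat[r]}.
Definition RF (r : nat) := {fraction Pol r}.

Definition var (r k : nat) : Pol r :=
  if @insub nat (fun k => k < r)%N 'I_r k is Some i then 'X_i else 0.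

(* Computed on a
   representative numerator/denominator pair; all substitutions used below
   are injective on polynomials, so this is independent of the representative. *)
Definition fsubst (n r : nat) (t : n.-tuple (Pol r)) (x : RF n) : RF r :=
  (comp_mpoly t (\n_(repr x)))%:F / (comp_mpoly t (\d_(repr x)))%:F.

Definition mould := forall r : nat, RF r.

Definition mould_add (A B : mould) : mould := fun r => A r + B r.
Definition mould_opp (A : mould) : mould := fun r => - A r.

Definition in_ARI (M : mould) : Prop := M 0%N = 0.

Definition circ_neutral (M : mould) : Prop :=
  forall r : nat, (1 < r)%N ->
    \sum_(i < r) fsubst [tuple var r ((k + i) %% r) | k < r] (M r) = 0.

Definition mu (A B : mould) : mould := fun r =>
  \sum_(i < r.+1)
     fsubst [tuple var r k | k < i] (A i)
   * fsubst [tuple var r (i + k) | k < r - i] (B (r - i)%N).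

Definition lu (A B : mould) : mould := mould_add (mu A B) (mould_opp (mu B A)).

(* A(v_1,..,v_i,v_{j+1},..,v_r) *)
Definition outer_tuple (r i j : nat) : (i + (r - j)).-tuple (Pol r) :=
  [tuple (if (k < i)%N then var r k else var r (k - i + j)) | k < i + (r - j)].

Definition amit (B A : mould) : mould := fun r =>
  \sum_(j < r) \sum_(i < j)
     fsubst (outer_tuple r i j) (A (i + (r - j))%N)
   * fsubst [tuple var r (i + k) - var r j | k < j - i] (B (j - i)%N).

Definition anit (B A : mould) : mould := fun r =>
  \sum_(j < r.+1) \sum_(1 <= i < j)
     fsubst (outer_tuple r i j) (A (i + (r - j))%N)
   * fsubst [tuple var r (i + k) - var r (i - 1) | k < j - i] (B (j - i)%N).

Definition arit (B A : mould) : mould := mould_add (amit B A) (mould_opp (anit B A)).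

Definition ari (A B : mould) : mould :=
  mould_add (mould_add (arit B A) (mould_opp (arit A B))) (lu A B).

(* The series f(x) = 1 - e^{-x} = sum_{n>=1} (-1)^(n+1) x^n / n! *)
Definition f_coef (n : nat) : rat :=
  if n is 0%N then 0 else (-1) ^+ n.+1 / (n`!)%:R.

Definition fstar_trunc (c : nat -> rat) (N : nat) : {poly rat} :=
  \sum_(1 <= r < N) c r *: 'X^(r.+1).
Definition fstar_der (c : nat -> rat) (N : nat) (p : {poly rat}) : {poly rat} :=
  fstar_trunc c N * p^`().

(* c is the coefficient sequence of the infinitesimal generator f_* of f:
   f(x) = exp(f_*(x) d/dx) . x  as formal power series.  Coefficient n of
   exp(f_* d/dx).x only involves c_1..c_(n-1) and the terms k < n of the
   exponential series, so comparing coefficients n < N on truncations is exact. *)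
Definition is_infgen_coef (c : nat -> rat) : Prop :=
  forall N n : nat, (n < N)%N ->
    (\sum_(k < N) (k`!%:R)^-1 *: iter k (fstar_der c N) 'X)`_n = f_coef n.

Definition lopil (c : nat -> rat) : mould := fun r =>
  if r is 0%N then 0 else
  ((c r)%:MP * \sum_(k < r) var r k)%:F /
  (var r 0 * (\prod_(k < r.-1) (var r k - var r k.+1)) * var r r.-1)%:F.

(* In depth r only
   the terms k <= r can be nonzero (ad_ari(P) raises the minimal depth by at
   least one when P^0 = 0, and M^0 = 0), so the depth-r component is a finite sum. *)
Definition Ad_invpil (c : nat -> rat) (M : mould) : mould := fun r =>
  \sum_(k < r.+1) (k`!%:R : RF r)^-1 * iter k (ari (mould_opp (lopil c))) M r.

From HB Require Import structures.
From mathcomp Require Import all_boot all_algebra fraction mpoly zify ring.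
Import GRing.Theory Num.Theory.
Set Implicit Arguments. Unset Strict Implicit. Unset Printing Implicit Defensive.
Local Open Scope ring_scope.

(* The cyclic sum [circ_sum] over the r rotations of the variables is additive and
   commutes with the constants 1/k!, so it suffices to show that lopil is
   circ-neutral and that ari preserves circ-neutrality.  In the cyclic sum of
   mu(A,B), the term that cuts the circle after i variables starting at position k
   is the term of mu(B,A) that cuts after r - i variables starting at k + i; hence
   the cyclic sum of lu(A,B) vanishes.  The cyclic sums of amit(B)A and anit(B)A
   regroup by the length m and the position b of the block seen by B: its cofactor
   is A summed over all rotations of the complementary arc, which is 0 by
   circ-neutrality of A as soon as r - m > 1.  For m = r - 1 that arc is a single
   variable, at once the successor (amit) and the predecessor (anit) of the block,
   so the two contributions cancel.  Finally, with the cyclic product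
   D = prod_i (v_i - v_(i+1)),
     1 / (v_1 (v_1 - v_2) ... (v_(r-1) - v_r) v_r) = (1/v_1 - 1/v_r) / D,
   and D and the numerator of lopil are invariant under rotation, so the cyclic sum
   of lopil telescopes.  Neither the values of the c_r nor M^0 = 0 are needed. *)

Lemma frac_repr (R : idomainType) (x : {fraction R}) :
  x = (\n_(repr x))%:F / (\d_(repr x))%:F.
Proof.
have hd : (\d_(repr x))%:F != 0 :> {fraction R} by rewrite tofrac_eq0 denom_ratioP.
apply: (canRL (mulfK hd)); rewrite -{1}[x]reprK.
unlock tofrac; rewrite -[_ * _]/(FracField.mul _ _) -FracField.pi_mul.
apply/eqmodP; rewrite /= FracField.equivfE /FracField.mulf.
by rewrite !numden_Ratio ?oner_neq0 ?mulf_neq0 ?denom_ratioP ?oner_neq0 // !mulr1 mulrC.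
Qed.

Lemma frac_numden (R : idomainType) (x : {fraction R}) :
  exists a b, b != 0 /\ x = a%:F / b%:F.
Proof. by exists (\n_(repr x)), (\d_(repr x)); split; [exact: denom_ratioP|exact: frac_repr]. Qed.

Lemma comp_mpolyA (n k l : nat) (R : comNzRingType) (t : k.-tuple {mpoly R[l]})
    (u : n.-tuple {mpoly R[k]}) (p : {mpoly R[n]}) :
  comp_mpoly t (comp_mpoly u p) = comp_mpoly [tuple comp_mpoly t (tnth u i) | i < n] p.
Proof.
rewrite (comp_mpolyE p u) (comp_mpolyE p) raddf_sum /=; apply: eq_bigr => m _.
rewrite linearZ /= rmorph_prod /=; congr (_ *: _); apply: eq_bigr => i _.
by rewrite rmorphXn tnth_mktuple.
Qed.

Lemma comp_mpoly_can (n k : nat) (R : comNzRingType) (t : n.-tuple {mpoly R[k]})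
    (s : k.-tuple {mpoly R[n]}) :
  (forall i, comp_mpoly s (tnth t i) = 'X_i) -> cancel (comp_mpoly t) (comp_mpoly s).
Proof. by move=> st p; rewrite comp_mpolyA (eq_mktuple _ st) comp_mpoly_id. Qed.

Lemma big_nat_perm (T : Type) (idx : T) (op : Monoid.com_law idx) N (h : nat -> nat)
    (F : nat -> T) :
  (forall k, (k < N)%N -> (h k < N)%N) ->
  (forall u v, (u < N)%N -> (v < N)%N -> h u = h v -> u = v) ->
  \big[op/idx]_(k < N) F (h k) = \big[op/idx]_(k < N) F k.
Proof.
move=> h_lt h_inj; pose h' (k : 'I_N) : 'I_N := Ordinal (h_lt k (ltn_ord k)).
have h'_inj : injective h' by move=> u v [] /h_inj-/(_ (ltn_ord u) (ltn_ord v)) /val_inj.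
by rewrite [RHS](reindex_inj h'_inj).
Qed.

Lemma big_shift_mod (T : Type) (idx : T) (op : Monoid.com_law idx) N i (F : nat -> T) :
  (0 < N)%N -> \big[op/idx]_(k < N) F ((k + i) %% N)%N = \big[op/idx]_(k < N) F k.
Proof.
move=> N_gt0; apply: (@big_nat_perm _ _ _ N (fun k => (k + i) %% N)%N F) => [k _|u v uN vN].
  by rewrite ltn_pmod.
by move/eqP; rewrite eqn_modDr !modn_small // => /eqP.
Qed.

Lemma big_ord_recr_pred (T : Type) (idx : T) (op : Monoid.law idx) n (F : nat -> T) :
  (0 < n)%N -> \big[op/idx]_(a < n) F a = op (\big[op/idx]_(a < n.-1) F a) (F n.-1).
Proof. by case: n => // n _; rewrite big_ord_recr. Qed.

Lemma sum_triangle (V : nmodType) r (F : nat -> nat -> V) :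
  \sum_(j < r) \sum_(i < j) F i j = \sum_(1 <= m < r) \sum_(i < r - m) F i (i + m)%N.
Proof.
elim: r => [|[|r] IH]; first by rewrite big_ord0 big_geq.
  by rewrite big_ord1 big_ord0 big_geq.
rewrite big_ord_recr /= IH [in RHS]big_nat_recr //= subSnn big_ord1 add0n.
rewrite [in RHS](eq_big_nat _ _
    (F2 := fun m => \sum_(i < r.+1 - m) F i (i + m)%N + F (r.+1 - m)%N r.+1));
  last by move=> m /andP[m1 mr]; rewrite subSn 1?ltnW // big_ord_recr /= subnK // ltnW.
rewrite big_split /= -addrA; congr (_ + _).
rewrite big_ord_recl addrC big_add1 /= big_mkord; congr (_ + _).
rewrite -[RHS](@big_nat_perm _ _ _ r (fun i => r - i.+1)%N (fun i => F (r.+1 - i.+1)%N r.+1));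
  try (move=> *; lia).
by apply: eq_bigr => i _; congr F; rewrite /bump /=; have := ltn_ord i; lia.
Qed.

Lemma sum_triangle1 (V : nmodType) r (F : nat -> nat -> V) :
  \sum_(j < r.+1) \sum_(1 <= i < j) F i j =
  \sum_(1 <= m < r) \sum_(i < r - m) F i.+1 (i.+1 + m)%N.
Proof.
rewrite big_ord_recl big_geq // add0r -(sum_triangle r (fun i j => F i.+1 j.+1)).
by apply: eq_bigr => j _; rewrite big_add1 /= big_mkord.
Qed.

Lemma partial_fraction_inv (F : fieldType) (a b d : F) :
  a != 0 -> b != 0 -> d != 0 -> b - a != 0 -> (a * b * d / (b - a))^-1 = (a^-1 - b^-1) / d.
Proof. by move=> a0 b0 d0 ba0; field; rewrite a0 b0 d0 ba0. Qed.

Section Substitution.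
Variables (n r : nat) (t : n.-tuple (Pol r)).
(* Injectivity keeps substituted denominators nonzero, so [fsubst t] does not
   depend on the representative and is a ring morphism. *)
Hypothesis t_inj : injective (comp_mpoly t).
Implicit Types (a b : Pol n) (x y : RF n).

Lemma fsubst_frac a b : b != 0 ->
  fsubst t (a%:F / b%:F) = (comp_mpoly t a)%:F / (comp_mpoly t b)%:F.
Proof.
move=> b0; rewrite /fsubst.
have /eqP := frac_repr (a%:F / b%:F).
have d0 := denom_ratioP (repr (a%:F / b%:F)).
rewrite eqr_div ?tofrac_eq0 // -!tofracM tofrac_eq => /eqP cross.
apply/eqP; rewrite eqr_div ?tofrac_eq0 ?(raddf_eq0 _ t_inj) // -!tofracM tofrac_eq.
by rewrite -!rmorphM /= -cross.
Qed.

Lemma fsubst0 : fsubst t 0 = 0.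
Proof.
have /eqP := frac_repr (0 : RF n).
rewrite eq_sym mulf_eq0 invr_eq0 !tofrac_eq0 (negbTE (denom_ratioP _)) orbF => /eqP n0.
by rewrite /fsubst n0 !raddf0 mul0r.
Qed.

Lemma fsubstD x y : fsubst t (x + y) = fsubst t x + fsubst t y.
Proof.
have [a [b [b0 ->]]] := frac_numden x; have [c [d [d0 ->]]] := frac_numden y.
have tb0 : comp_mpoly t b != 0 by rewrite (raddf_eq0 _ t_inj).
have td0 : comp_mpoly t d != 0 by rewrite (raddf_eq0 _ t_inj).
rewrite addf_div ?tofrac_eq0 // -!tofracM -tofracD !fsubst_frac ?mulf_neq0 //.
by rewrite addf_div ?tofrac_eq0 // -!tofracM -tofracD rmorphD /= !rmorphM.
Qed.

Lemma fsubstM x y : fsubst t (x * y) = fsubst t x * fsubst t y.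
Proof.
have [a [b [b0 ->]]] := frac_numden x; have [c [d [d0 ->]]] := frac_numden y.
by rewrite mulf_div -!tofracM !fsubst_frac ?mulf_neq0 // mulf_div -!tofracM !rmorphM.
Qed.

Lemma fsubstN x : fsubst t (- x) = - fsubst t x.
Proof. by apply/eqP; rewrite -subr_eq0 opprK -fsubstD addNr fsubst0. Qed.

Lemma fsubstB x y : fsubst t (x - y) = fsubst t x - fsubst t y.
Proof. by rewrite fsubstD fsubstN. Qed.

Lemma fsubst_sum I (s : seq I) (P : pred I) (F : I -> RF n) :
  fsubst t (\sum_(i <- s | P i) F i) = \sum_(i <- s | P i) fsubst t (F i).
Proof. exact: (big_morph _ fsubstD fsubst0). Qed.

Lemma fsubstV x : fsubst t x^-1 = (fsubst t x)^-1.
Proof.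
have [a [b [b0 ->]]] := frac_numden x.
have [->|a0] := eqVneq a 0; first by rewrite tofrac0 !mul0r invr0 fsubst0 invr0.
by rewrite invf_div !fsubst_frac // invf_div.
Qed.

Lemma fsubst_nat k : fsubst t k%:R = k%:R.
Proof.
rewrite -[k%:R]divr1 -(rmorph_nat (@tofrac _) k) -tofrac1 fsubst_frac ?oner_neq0 //.
by rewrite rmorph_nat rmorph1 rmorph_nat tofrac1 divr1.
Qed.

End Substitution.

Lemma fsubst_comp n k r (t : k.-tuple (Pol r)) (u : n.-tuple (Pol k)) (x : RF n) :
  injective (comp_mpoly t) -> injective (comp_mpoly u) ->
  fsubst t (fsubst u x) = fsubst [tuple comp_mpoly t (tnth u i) | i < n] x.
Proof.
move=> t_inj u_inj; rewrite {2}/fsubst fsubst_frac ?(raddf_eq0 _ u_inj) ?denom_ratioP //.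
by rewrite !comp_mpolyA.
Qed.

Lemma var_ltE r a (ar : (a < r)%N) : var r a = 'X_(Ordinal ar).
Proof. by rewrite /var insubT. Qed.

Lemma var_geq r a : (r <= a)%N -> var r a = 0.
Proof. by move=> ra; rewrite /var insubF // ltnNge ra. Qed.

Lemma comp_var_mktuple k r (h : nat -> Pol k) a : (a < r)%N ->
  comp_mpoly [tuple h b | b < r] (var r a) = h a.
Proof. by move=> ar; rewrite (var_ltE ar) comp_mpolyXU -tnth_nth tnth_mktuple. Qed.

Lemma var_neq0 r a : (a < r)%N -> var r a != 0.
Proof.
move=> ar; rewrite (var_ltE ar); apply/eqP => /(congr1 (meval (fun=> 1 : rat))).
by rewrite mevalXU meval0 => /eqP; rewrite oner_eq0.
Qed.

Lemma var_sub_neq0 r a b : (a < r)%N -> (b < r)%N -> a != b -> var r a - var r b != 0.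
Proof.
move=> ar br ab; rewrite (var_ltE ar) (var_ltE br); apply/eqP.
move/(congr1 (meval (fun i : 'I_r => (i : nat)%:R : rat))).
by rewrite mevalB !mevalXU meval0 => /eqP; rewrite subr_eq0 eqr_nat (negbTE ab).
Qed.

Section Renaming.
Variables (N r : nat) (g : nat -> nat).
Hypothesis g_lt : forall u, (u < N)%N -> (g u < r)%N.
Hypothesis g_inj : forall u v, (u < N)%N -> (v < N)%N -> g u = g v -> u = v.

Let g_inv_var (a : nat) : Pol N :=
  if [pick u : 'I_N | g u == a] is Some u then 'X_u else 0.
Let g_inv : r.-tuple (Pol N) := [tuple g_inv_var a | a < r].

Let comp_g_inv (i : 'I_N) : comp_mpoly g_inv (var r (g i)) = 'X_i.
Proof.
rewrite comp_var_mktuple ?g_lt // /g_inv_var.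
case: pickP => [u /eqP gu | /(_ i)]; last by rewrite eqxx.
by congr 'X__; apply: val_inj; apply: g_inj gu.
Qed.

Lemma renaming_inj : injective (comp_mpoly [tuple var r (g u) | u < N]).
Proof.
apply: (can_inj (g := comp_mpoly g_inv)); apply: comp_mpoly_can => i.
by rewrite tnth_mktuple comp_g_inv.
Qed.

Lemma shifted_renaming_inj e : (forall u, (u < N)%N -> g u != e) ->
  injective (comp_mpoly [tuple var r (g u) - var r e | u < N]).
Proof.
move=> g_neq_e; apply: (can_inj (g := comp_mpoly g_inv)); apply: comp_mpoly_can => i.
rewrite tnth_mktuple raddfB /= comp_g_inv.
suff -> : comp_mpoly g_inv (var r e) = 0 by rewrite subr0.
have [er|/var_geq->] := ltnP e r; last exact: raddf0.
rewrite comp_var_mktuple // /g_inv_var; case: pickP => // u /eqP gu.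
by have := g_neq_e u (ltn_ord u); rewrite gu eqxx.
Qed.

End Renaming.

Definition arc_tuple r b n : n.-tuple (Pol r) := [tuple var r ((u + b) %% r) | u < n].
Definition arc_diff_tuple r b n e : n.-tuple (Pol r) :=
  [tuple var r ((u + b) %% r) - var r ((e + b) %% r) | u < n].
Definition circ_sum r (x : RF r) : RF r := \sum_(k < r) fsubst (arc_tuple r k r) x.

Lemma circ_neutralE (M : mould) :
  circ_neutral M = forall r, (1 < r)%N -> circ_sum (M r) = 0.
Proof. by []. Qed.

Lemma comp_arc r b n a : (a < n)%N ->
  comp_mpoly (arc_tuple r b n) (var n a) = var r ((a + b) %% r).
Proof. exact: (comp_var_mktuple (fun u => var r ((u + b) %% r))). Qed.

Lemma arc_modn r b n : arc_tuple r (b %% r) n = arc_tuple r b n.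
Proof. by apply: eq_mktuple => u; rewrite modnDmr. Qed.

Lemma arc_inj r b n : (n <= r)%N -> injective (comp_mpoly (arc_tuple r b n)).
Proof.
move=> nr; apply: (@renaming_inj n r (fun u => (u + b) %% r)%N) => [u un|u v un vn].
  by rewrite ltn_pmod //; lia.
by move/eqP; rewrite eqn_modDr !modn_small ?(leq_trans _ nr) // => /eqP.
Qed.

Lemma circ_sum_is_zmod_morphism r : zmod_morphism (@circ_sum r).
Proof.
move=> x y; rewrite /circ_sum -sumrB; apply: eq_bigr => k _.
by rewrite fsubstB //; apply: arc_inj.
Qed.

HB.instance Definition _ r := GRing.isZmodMorphism.Build (RF r) (RF r) (@circ_sum r)
  (@circ_sum_is_zmod_morphism r).

Lemma circ_sum_natVM r (k : nat) (x : RF r) :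
  circ_sum ((k%:R)^-1 * x) = (k%:R)^-1 * circ_sum x.
Proof.
rewrite /circ_sum mulr_sumr; apply: eq_bigr => b _.
by rewrite fsubstM ?fsubstV ?fsubst_nat //; apply: arc_inj.
Qed.

Section ArcRenaming.
Variables (r k n : nat) (h : nat -> nat).
Hypothesis h_lt : forall u, (u < n)%N -> (h u < r)%N.
Hypothesis h_inj : forall u v, (u < n)%N -> (v < n)%N -> h u = h v -> u = v.

Lemma fsubst_arc_renaming (x : RF n) :
  fsubst (arc_tuple r k r) (fsubst [tuple var r (h u) | u < n] x) =
  fsubst [tuple var r ((h u + k) %% r) | u < n] x.
Proof.
rewrite fsubst_comp; [|exact: arc_inj|exact: renaming_inj].
by congr fsubst; apply: eq_mktuple => u; rewrite tnth_mktuple comp_arc ?h_lt.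
Qed.

Lemma fsubst_arc_shifted_renaming d (x : RF n) :
  (d < r)%N -> (forall u, (u < n)%N -> h u != d) ->
  fsubst (arc_tuple r k r) (fsubst [tuple var r (h u) - var r d | u < n] x) =
  fsubst [tuple var r ((h u + k) %% r) - var r ((d + k) %% r) | u < n] x.
Proof.
move=> dr h_neq_d; rewrite fsubst_comp; [|exact: arc_inj|exact: shifted_renaming_inj].
congr fsubst; apply: eq_mktuple => u.
by rewrite tnth_mktuple raddfB /= !comp_arc ?h_lt.
Qed.

End ArcRenaming.

Definition mu_arc_term (P Q : mould) r i k : RF r :=
  fsubst (arc_tuple r k i) (P i) * fsubst (arc_tuple r (i + k) (r - i)) (Q (r - i)%N).

Lemma circ_sum_mu (P Q : mould) r :
  circ_sum (mu P Q r) = \sum_(i < r.+1) \sum_(k < r) mu_arc_term P Q r i k.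
Proof.
rewrite /circ_sum exchange_big /=; apply: eq_bigr => k _.
rewrite /mu (fsubst_sum (arc_inj (leqnn r))); apply: eq_bigr => i _.
have ir := ltn_ord i.
rewrite (fsubstM (arc_inj (leqnn r))) (@fsubst_arc_renaming r k i id); try lia.
rewrite (@fsubst_arc_renaming r k (r - i) (addn i)); try lia.
rewrite /mu_arc_term; congr (_ * fsubst _ _).
by apply: eq_mktuple => u; congr (var r (_ %% r)); lia.
Qed.

Lemma mu_arc_termC (P Q : mould) r i k : (i <= r)%N ->
  mu_arc_term P Q r i k = mu_arc_term Q P r (r - i) ((k + i) %% r).
Proof.
move=> ir; rewrite /mu_arc_term subKn // mulrC arc_modn [(i + k)%N]addnC.
congr (_ * fsubst _ _); apply: eq_mktuple => u; rewrite addnA modnDmr.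
by rewrite (_ : u + (r - i) + (k + i) = u + k + r)%N ?modnDr //; lia.
Qed.

Lemma circ_sum_lu (P Q : mould) r : circ_sum (lu P Q r) = 0.
Proof.
rewrite /lu /mould_add /mould_opp raddfB /= !circ_sum_mu; apply/eqP; rewrite subr_eq0.
have [->|r_gt0] := posnP r; first by rewrite !big1 // => i _; rewrite big_ord0.
rewrite -(@big_nat_perm _ _ _ r.+1 (fun i => r - i)%N
            (fun i => \sum_(k < r) mu_arc_term Q P r i k)) => [|i|u v]; try lia.
apply/eqP/eq_bigr => i _; rewrite -[RHS](@big_shift_mod _ _ _ r i) //.
by apply: eq_bigr => k _; rewrite mu_arc_termC // -ltnS.
Qed.

Section AritTerms.
Variables (A B : mould) (r : nat).

Lemma fsubst_arc_outer m i k : (m < r)%N -> (i <= r - m)%N ->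
  fsubst (arc_tuple r k r) (fsubst (outer_tuple r i (i + m)) (A (i + (r - (i + m)))%N)) =
  fsubst (arc_tuple r ((k + i) %% r + m) (r - m))
    (fsubst (arc_tuple (r - m) ((r - m - i) %% (r - m)) (r - m)) (A (r - m)%N)).
Proof.
move=> mr ir; rewrite /outer_tuple (_ : i + (r - (i + m)) = r - m)%N; last by lia.
pose g u := if (u < i)%N then u else (u + m)%N.
rewrite (_ : [tuple _ | _ < r - m] = [tuple var r (g u) | u < r - m]); last first.
  by apply: eq_mktuple => u; rewrite /g; case: ifP => // /negbT ui; congr (var r _); lia.
rewrite (@fsubst_arc_renaming r k (r - m) g) => [|u|u v]; try by rewrite /g; do 2?case: ifP; lia.
rewrite fsubst_comp; [|by apply: arc_inj; lia|exact: arc_inj].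
congr fsubst; apply: eq_mktuple => u; have ur := ltn_ord u.
rewrite tnth_mktuple comp_arc; last by rewrite ltn_pmod; lia.
rewrite modnDmr [((k + i) %% r + m)%N]addnC addnA modnDmr /g; congr (var r _).
case: ifP => ui.
  have -> : ((u + (r - m - i)) %% (r - m) = u + (r - m - i))%N by rewrite modn_small; lia.
  by rewrite (_ : u + (r - m - i) + m + (k + i) = u + k + r)%N ?modnDr //; lia.
have -> : ((u + (r - m - i)) %% (r - m) = u - i)%N.
  by rewrite (_ : u + (r - m - i) = u - i + (r - m))%N ?modnDr ?modn_small //; lia.
by congr (_ %% r)%N; lia.
Qed.

Lemma fsubst_arc_block m i e d k :
  (i + m <= r)%N -> (m <= e < r)%N -> ((i + e) %% r = d)%N ->
  fsubst (arc_tuple r k r) (fsubst [tuple var r (i + u) - var r d | u < m] (B m)) =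
  fsubst (arc_diff_tuple r ((k + i) %% r) m e) (B m).
Proof.
move=> imr /andP[me er] <-.
rewrite (@fsubst_arc_shifted_renaming r k m (addn i)) => [|u|u v||u um]; try lia.
  congr fsubst; apply: eq_mktuple => u; rewrite !modnDmr.
  by congr (var r (_ %% r) - var r _); [lia|rewrite modnDml; congr (_ %% r)%N; lia].
apply/eqP => /(congr1 (modn^~ r)); rewrite modn_mod => /eqP.
by rewrite eqn_modDl !modn_small //; lia.
Qed.

(* A block of m variables starting at position b (indices mod r), shifted by the
   variable at position b + e, is fed to B; A sees the complementary arc, starting
   at b + m, rotated by q. *)
Definition arit_arc_summand m e q b : RF r :=
  fsubst (arc_tuple r (b + m) (r - m)) (fsubst (arc_tuple (r - m) q (r - m)) (A (r - m)%N)) *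
  fsubst (arc_diff_tuple r b m e) (B m).

Definition arit_arc_term m e b : RF r :=
  fsubst (arc_tuple r (b + m) (r - m)) (circ_sum (A (r - m)%N)) *
  fsubst (arc_diff_tuple r b m e) (B m).

Lemma circ_sum_arit_pair m i e d :
  (i + m <= r)%N -> (m <= e < r)%N -> ((i + e) %% r = d)%N ->
  circ_sum (fsubst (outer_tuple r i (i + m)) (A (i + (r - (i + m)))%N) *
            fsubst [tuple var r (i + u) - var r d | u < m] (B m)) =
  \sum_(b < r) arit_arc_summand m e ((r - m - i) %% (r - m)) b.
Proof.
move=> imr mer ied; have mr : (m < r)%N by lia.
rewrite /circ_sum -(@big_shift_mod _ _ _ r i (arit_arc_summand m e _)); last by lia.
apply: eq_bigr => k _; rewrite fsubstM; last exact: arc_inj.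
by rewrite fsubst_arc_outer ?(fsubst_arc_block k imr mer ied) //; lia.
Qed.

Lemma sum_arit_arc_summand m e (h : nat -> nat) : (m < r)%N ->
  (forall i, (i < r - m)%N -> (h i < r - m)%N) ->
  (forall u v, (u < r - m)%N -> (v < r - m)%N -> h u = h v -> u = v) ->
  \sum_(i < r - m) \sum_(b < r) arit_arc_summand m e (h i) b =
  \sum_(b < r) arit_arc_term m e b.
Proof.
move=> mr h_lt h_inj; rewrite exchange_big; apply: eq_bigr => b _.
rewrite (@big_nat_perm _ _ _ (r - m) h (arit_arc_summand m e ^~ b)) //.
rewrite /arit_arc_term /circ_sum fsubst_sum ?mulr_suml //; apply: arc_inj; lia.
Qed.

Lemma circ_sum_amit :
  circ_sum (amit B A r) = \sum_(1 <= m < r) \sum_(b < r) arit_arc_term m m b.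
Proof.
pose F i j := fsubst (outer_tuple r i j) (A (i + (r - j))%N) *
  fsubst [tuple var r (i + u) - var r j | u < j - i] (B (j - i)%N).
rewrite -[amit B A r]/(\sum_(j < r) \sum_(i < j) F i j) sum_triangle raddf_sum.
apply: eq_big_nat => m /andP[m1 mr].
rewrite raddf_sum /= -(@sum_arit_arc_summand m m (fun i => (r - m - i) %% (r - m))%N) //.
- apply: eq_bigr => i _; have := ltn_ord i => ir.
  by rewrite /F addKn (@circ_sum_arit_pair m i m) ?(@modn_small (i + m) r) //; lia.
- by move=> i ir; rewrite ltn_pmod; lia.
- move=> u v ur vr; case: u ur => [|u] ur; case: v vr => [|v] vr //.
  all: rewrite ?subn0 ?modnn !modn_small; lia.
Qed.

Lemma circ_sum_anit :
  circ_sum (anit B A r) = \sum_(1 <= m < r) \sum_(b < r) arit_arc_term m r.-1 b.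
Proof.
pose F i j := fsubst (outer_tuple r i j) (A (i + (r - j))%N) *
  fsubst [tuple var r (i + u) - var r (i - 1) | u < j - i] (B (j - i)%N).
rewrite -[anit B A r]/(\sum_(j < r.+1) \sum_(1 <= i < j) F i j) sum_triangle1 raddf_sum.
apply: eq_big_nat => m /andP[m1 mr].
rewrite raddf_sum /=.
rewrite -(@sum_arit_arc_summand m r.-1 (fun i => (r - m - i.+1) %% (r - m))%N) //.
- apply: eq_bigr => i _; have := ltn_ord i => ir.
  rewrite /F addKn (@circ_sum_arit_pair m i.+1 r.-1) //; try lia.
  by rewrite (_ : i.+1 + r.-1 = i + r)%N ?modnDr ?modn_small; lia.
- by move=> i ir; rewrite ltn_pmod; lia.
- by move=> u v ur vr; rewrite !modn_small; lia.
Qed.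

Lemma circ_sum_arit : (forall n, (1 < n < r)%N -> circ_sum (A n) = 0) ->
  circ_sum (arit B A r) = 0.
Proof.
move=> hA; rewrite /arit /mould_add /mould_opp raddfB /= circ_sum_amit circ_sum_anit -sumrB.
apply: big1_seq => m /andP[_]; rewrite mem_index_iota => /andP[m1 mr].
rewrite -sumrB; apply: big1 => b _.
have [->|m_neq] := eqVneq m r.-1; first by rewrite subrr.
by rewrite /arit_arc_term hA ?fsubst0 ?mul0r ?subrr //; lia.
Qed.

End AritTerms.

Lemma ari_circ_neutral (P Q : mould) :
  circ_neutral P -> circ_neutral Q -> circ_neutral (ari P Q).
Proof.
rewrite !circ_neutralE => hP hQ r r_gt1.
have -> : ari P Q r = arit Q P r - arit P Q r + lu P Q r by [].
rewrite raddfD raddfB /= circ_sum_lu addr0.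
by rewrite !circ_sum_arit ?subrr // => n /andP[n_gt1 _]; [exact: hQ|exact: hP].
Qed.

Lemma opp_circ_neutral (P : mould) : circ_neutral P -> circ_neutral (mould_opp P).
Proof. by rewrite !circ_neutralE => hP r r_gt1; rewrite raddfN /= hP ?oppr0. Qed.

Lemma circ_neutral_exp_series (X : nat -> mould) : (forall k, circ_neutral (X k)) ->
  circ_neutral (fun r => \sum_(k < r.+1) (k`!%:R : RF r)^-1 * X k r).
Proof.
rewrite circ_neutralE => hX r r_gt1; rewrite raddf_sum big1 // => k _.
have hXk : circ_sum (X k r) = 0 := hX k r r_gt1.
by rewrite /= circ_sum_natVM hXk mulr0.
Qed.

Section ChainDenominator.
Variable r : nat.
Hypothesis r_gt1 : (1 < r)%N.

Definition chain_den : Pol r :=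
  var r 0 * (\prod_(k < r.-1) (var r k - var r k.+1)) * var r r.-1.

Let x a : RF r := (var r (a %% r))%:F.
Let cyc := \prod_(a < r) (x a - x a.+1).

Let xE a : x (a %% r) = x a.
Proof. by rewrite /x modn_mod. Qed.

Let xSE a : x (a %% r).+1 = x a.+1.
Proof. by rewrite /x -[(a %% r).+1]addn1 modnDml addn1. Qed.

Let x_addr a : x (a + r) = x a.
Proof. by rewrite /x modnDr. Qed.

Let x_neq0 a : x a != 0.
Proof. by rewrite tofrac_eq0 var_neq0 // ltn_pmod //; lia. Qed.

Let x_sub_neq0 a b : (a %% r != b %% r)%N -> x a - x b != 0.
Proof. by move=> ab; rewrite -tofracB tofrac_eq0 var_sub_neq0 // ltn_pmod //; lia. Qed.

Let cyc_neq0 : cyc != 0.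
Proof.
apply/prodf_neq0 => a _; apply: x_sub_neq0.
by rewrite -[a.+1]addn1 -{1}(addn0 a) eqn_modDl !modn_small //; lia.
Qed.

Lemma comp_arc_chain_den k :
  (comp_mpoly (arc_tuple r k r) chain_den)%:F * (x (r.-1 + k) - x k) =
  x k * x (r.-1 + k) * cyc.
Proof.
have cycE : cyc = \prod_(a < r.-1) (x (a + k) - x (a + k).+1) * (x (r.-1 + k) - x k).
  rewrite /cyc -(@big_shift_mod _ _ _ r k (fun a => x a - x a.+1)) /=; last lia.
  under eq_bigr => a _ do rewrite xE xSE.
  rewrite (@big_ord_recr_pred _ _ _ r (fun a => x (a + k) - x (a + k).+1)); last lia.
  rewrite -addSn prednK; last lia.
  by rewrite [(r + k)%N]addnC x_addr.
rewrite /chain_den !rmorphM /= !rmorph_prod /= !comp_arc; try lia.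
rewrite (eq_bigr (fun a : 'I_r.-1 => x (a + k) - x (a + k).+1)) => [|a _]; last first.
  by rewrite !rmorphB /= !comp_arc //; have := ltn_ord a; lia.
by rewrite cycE -!mulrA; congr (_ * _); rewrite mulrCA.
Qed.

Lemma comp_arc_chain_denV k :
  ((comp_mpoly (arc_tuple r k r) chain_den)%:F)^-1 = ((x k)^-1 - (x (r.-1 + k))^-1) / cyc.
Proof.
have xx0 : x (r.-1 + k) - x k != 0.
  by apply: x_sub_neq0; rewrite -{2}(add0n k) eqn_modDr !modn_small //; lia.
have := comp_arc_chain_den k; set c := (_)%:F => cE.
have -> : c = x k * x (r.-1 + k) * cyc / (x (r.-1 + k) - x k) by rewrite -cE mulfK.
exact: (partial_fraction_inv (x_neq0 k) (x_neq0 _) cyc_neq0 xx0).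
Qed.

Lemma chain_den_neq0 : chain_den != 0.
Proof.
rewrite /chain_den !mulf_neq0 ?var_neq0 //; try lia.
by apply/prodf_neq0 => a _; apply: var_sub_neq0; have := ltn_ord a; lia.
Qed.

Lemma circ_sum_chain (p : Pol r) : (forall k, comp_mpoly (arc_tuple r k r) p = p) ->
  circ_sum (p%:F / chain_den%:F) = 0.
Proof.
move=> p_inv.
have termE k : fsubst (arc_tuple r k r) (p%:F / chain_den%:F) =
               p%:F * (((x k)^-1 - (x (r.-1 + k))^-1) / cyc).
  rewrite fsubst_frac ?chain_den_neq0 ?p_inv ?comp_arc_chain_denV //; exact: arc_inj.
rewrite /circ_sum; under eq_bigr => k _ do rewrite termE.
have shift : \sum_(k < r) (x (r.-1 + k))^-1 = \sum_(k < r) (x k)^-1.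
  rewrite -(@big_shift_mod _ _ _ r r.-1 (fun k => (x k)^-1)); last lia.
  by apply: eq_bigr => k _; rewrite xE addnC.
by rewrite -mulr_sumr -mulr_suml sumrB shift subrr mul0r mulr0.
Qed.

End ChainDenominator.

Lemma lopil_circ_neutral c : circ_neutral (lopil c).
Proof.
rewrite circ_neutralE => -[|[|r]] // _; apply: circ_sum_chain => // k.
rewrite rmorphM /= comp_mpolyC raddf_sum /=; congr (_ * _).
rewrite -[RHS](@big_shift_mod _ _ _ r.+2 k (var r.+2)) //.
by apply: eq_bigr => a _; exact: comp_arc.
Qed.

Theorem proposition32 (c : nat -> rat) (Hc : is_infgen_coef c) (M : mould) :
  in_ARI M -> circ_neutral M -> circ_neutral (Ad_invpil c M).
Proof.
move=> _ hM; apply: circ_neutral_exp_series => k.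
have hL := opp_circ_neutral (lopil_circ_neutral c).
by elim: k => [|k IH] //=; exact: ari_circ_neutral.
Qed.
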